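(* Let $k$ be a field of characteristic $p>0$. Then the $k$-algebra $$\Lambda=kQ/\big(\beta^{6p+1},\ \alpha\gamma,\ \alpha(\beta+\beta^2)\gamma,\ \alpha\beta^{2p+1}\gamma\big)$$ (which equals $kQ/I(6p+1;6p+1,6p+1;V)$ with $V=(\beta^{6p+1})+k\cdot1+k(\beta+\beta^2)+k\beta^{2p+1}$) has ordinary quiver $Q$, containing the loop $\beta$, and satisfies $\mathrm{HH}^1(\Lambda)=0$.
   Context: $Q$ is the quiver with vertices $1,2,3$ and arrows $\alpha\colon 2\to1$, $\beta\colon 2\to 2$, $\gamma\colon 3\to 2$; $kQ$ is generated by pairwise orthogonal idempotents $e_1,e_2,e_3$ (sum $1$) and $\alpha,\beta,\gamma$ with $e_1\alpha=\alpha=\alpha e_2$, $e_2\beta=\beta=\beta e_2$, $e_3\gamma=\gamma=\gamma e_2$, $\gamma\alpha=\beta\alpha=\gamma\beta=0$; for $v=\sum_iv_i\beta^i\in k[\beta]$, $\alpha v\gamma=\sum_iv_i\alpha\beta^i\gamma$. $I(n;n,n;V)$ is the two-sided ideal generated by $\alpha\beta^n$, $\beta^n$, $\beta^n\gamma$ and all $\alpha v\gamma$, $v\in V$; the displayed ideal is the two-sided ideal generated by the listed elements. $\mathrm{HH}^1(\Lambda)=\mathrm{Der}_k(\Lambda,\Lambda)/\mathrm{Inn}(\Lambda)$. *)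

From HB Require Import structures.
From mathcomp Require Import all_boot all_order all_algebra.
Unset Printing Implicit Defensive.
Import Order.TTheory GRing.Theory Num.Theory.
Local Open Scope ring_scope.

(* Model of the path algebra kQ: Q has vertices 1,2,3 and arrows
   alpha : 2 -> 1, beta : 2 -> 2 (loop), gamma : 3 -> 2.
   Paths are composed right-to-left (e1 alpha = alpha = alpha e2,
   e2 gamma = gamma = gamma e3).  kQ is realised through its faithful
   representation in 3x3 matrices over k[x]: entry (j,i) of an element
   x is e_j x e_i, a k-combination of paths i -> j, where beta^n is
   recorded as x^n.  Indices 'I_3 = {0,1,2} correspond to vertices 1,2,3. *)

Definition Mx (k : fieldType) := 'M[{poly k}]_3.

Definition v1 : 'I_3 := @Ordinal 3 0 isT.
Definition v2 : 'I_3 := @Ordinal 3 1 isT.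
Definition v3 : 'I_3 := @Ordinal 3 2 isT.

(* the image of kQ: e1 kQ e1 = k e1, e2 kQ e2 = k[beta], e3 kQ e3 = k e3,
   e1 kQ e2 = alpha k[beta], e2 kQ e3 = k[beta] gamma,
   e1 kQ e3 = alpha k[beta] gamma, all other e_j kQ e_i = 0. *)
Definition in_kQ (k : fieldType) (A : Mx k) : Prop :=
  (forall i j : 'I_3, (j < i)%N -> A i j = 0) /\
  (size (A v1 v1) <= 1)%N /\ (size (A v3 v3) <= 1)%N.
Arguments in_kQ {k}.

Definition e1 (k : fieldType) : Mx k := delta_mx v1 v1.
Definition e2 (k : fieldType) : Mx k := delta_mx v2 v2.
Definition e3 (k : fieldType) : Mx k := delta_mx v3 v3.
Definition alpha (k : fieldType) : Mx k := delta_mx v1 v2.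
Definition beta (k : fieldType) : Mx k := 'X *: delta_mx v2 v2.
Definition gamma (k : fieldType) : Mx k := delta_mx v2 v3.

(* v(beta) in kQ for v in k[beta] (with beta^0 = e2) *)
Definition poly_beta (k : fieldType) (v : {poly k}) : Mx k := v *: delta_mx v2 v2.
Arguments poly_beta {k}.

Definition kscale (k : fieldType) (c : k) (x : Mx k) : Mx k := c%:P *: x.
Arguments kscale {k}.

Definition gen_ideal (k : fieldType) (S : Mx k -> Prop) (x : Mx k) : Prop :=
  exists n (a s b : 'I_n -> Mx k),
    (forall i, in_kQ (a i) /\ S (s i) /\ in_kQ (b i)) /\
    x = \sum_(i < n) a i * s i * b i.
Arguments gen_ideal {k}.

Definition arrow (k : fieldType) (i : 'I_3) : Mx k :=
  if val i == 0%N then alpha k else if val i == 1%N then beta k else gamma k.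

Definition arrow_ideal_pow (k : fieldType) (m : nat) : Mx k -> Prop :=
  gen_ideal (fun y => exists t : m.-tuple 'I_3, y = \prod_(i <- t) arrow k i).

(* I is admissible: R^m <= I <= R^2 for some m >= 2; then kQ/I has
   ordinary quiver Q. *)
Definition admissible (k : fieldType) (I : Mx k -> Prop) : Prop :=
  (forall x, I x -> arrow_ideal_pow k 2 x) /\
  exists m, (2 <= m)%N /\ forall x, arrow_ideal_pow k m x -> I x.

(* HH^1(kQ/I) = 0, i.e. every k-linear derivation of kQ/I is inner.
   A map D : kQ/I -> kQ/I is represented by a lift f : kQ -> kQ which is
   well defined modulo I. *)
Definition is_derivation_mod (k : fieldType) (I : Mx k -> Prop) (f : Mx k -> Mx k) : Prop :=
  (forall x, in_kQ x -> in_kQ (f x)) /\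
  (forall x y, in_kQ x -> in_kQ y -> I (x - y) -> I (f x - f y)) /\
  (forall (c : k) x y, in_kQ x -> in_kQ y ->
      I (f (kscale c x + y) - (kscale c (f x) + f y))) /\
  (forall x y, in_kQ x -> in_kQ y -> I (f (x * y) - (f x * y + x * f y))).

Definition is_inner_mod (k : fieldType) (I : Mx k -> Prop) (f : Mx k -> Mx k) : Prop :=
  exists a, in_kQ a /\ forall x, in_kQ x -> I (f x - (a * x - x * a)).

Definition HH1_vanishes (k : fieldType) (I : Mx k -> Prop) : Prop :=
  forall f, is_derivation_mod k I f -> is_inner_mod k I f.

Definition Lam_ideal (k : fieldType) (p : nat) : Mx k -> Prop :=
  gen_ideal (fun y => y = beta k ^+ (6 * p + 1) \/ y = alpha k * gamma k \/
      y = alpha k * (beta k + beta k ^+ 2) * gamma k \/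
      y = alpha k * beta k ^+ (2 * p + 1) * gamma k).

Definition V_sub (k : fieldType) (p : nat) (v : {poly k}) : Prop :=
  exists (q : {poly k}) (c1 c2 c3 : k),
    v = 'X ^+ (6 * p + 1) * q + c1%:P + c2 *: ('X + 'X ^+ 2) + c3 *: 'X ^+ (2 * p + 1).

Definition I_nnnV (k : fieldType) (n : nat) (V : {poly k} -> Prop) : Mx k -> Prop :=
  gen_ideal (fun y => y = alpha k * beta k ^+ n \/ y = beta k ^+ n \/
      y = beta k ^+ n * gamma k \/
      exists v, V v /\ y = alpha k * poly_beta v * gamma k).

(* Elements of kQ are upper triangular 3 x 3 matrices over k[X], X standing for beta, whose
   entries at the vertices 1 and 3 are constants; the ideal I of Lambda is cut out entrywise:
   X^n divides the alpha-, beta- and gamma-entries and the alpha-gamma-entry lies in V, where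
   n = 6p+1.  A derivation D modulo I is corrected by inner derivations until it kills e1, e2, e3
   and gamma; it then maps alpha to alpha u(beta) and beta to w(beta).  Applying D to
   alpha v(beta) gamma, which lies in I for v in V, shows that u v + v' w lies in V for every v
   in V.  For v = 1, beta + beta^2 and beta^(2p+1), whose derivative is beta^(2p) in
   characteristic p, a comparison of coefficients forces X^n | w and u = u(0) mod X^n, so one
   more inner correction by u(0) e1 makes D vanish on the generators of kQ, hence on kQ. *)

From mathcomp Require Import all_boot all_order all_algebra ring zify.
Import GRing.Theory.
Set Implicit Arguments.
Unset Strict Implicit.
Local Open Scope ring_scope.

(** * The path algebra as triangular matrices *)

Section QuiverMatrices.
Variable k : fieldType.
Implicit Types (a b c d e f : {poly k}).

Definition qmx a b c d e f : Mx k := \matrix_(i < 3, j < 3)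
  match nat_of_ord i, nat_of_ord j with
  | 0, 0 => a | 0, 1 => b | 0, 2 => c | 1, 1 => d | 1, 2 => e | 2, 2 => f
  | _, _ => 0
  end.

Local Ltac qmx_entrywise := apply/matrixP; case=> [[|[|[|?]]] ?]; case=> [[|[|[|?]]] ?];
  rewrite ?(mxE, big_ord_recl, big_ord0) //=; ring.

Lemma qmxM a b c d e f a' b' c' d' e' f' :
  qmx a b c d e f * qmx a' b' c' d' e' f' =
  qmx (a * a') (a * b' + b * d') (a * c' + b * e' + c * f') (d * d') (d * e' + e * f') (f * f').
Proof. qmx_entrywise. Qed.

Lemma qmxD a b c d e f a' b' c' d' e' f' :
  qmx a b c d e f + qmx a' b' c' d' e' f' =
  qmx (a + a') (b + b') (c + c') (d + d') (e + e') (f + f').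
Proof. qmx_entrywise. Qed.

Lemma qmxN a b c d e f : - qmx a b c d e f = qmx (- a) (- b) (- c) (- d) (- e) (- f).
Proof. qmx_entrywise. Qed.

Lemma kscale_qmx (s : k) a b c d e f :
  kscale s (qmx a b c d e f) =
  qmx (s%:P * a) (s%:P * b) (s%:P * c) (s%:P * d) (s%:P * e) (s%:P * f).
Proof. rewrite /kscale; qmx_entrywise. Qed.

Lemma qmx0 : qmx 0 0 0 0 0 0 = 0.
Proof. qmx_entrywise. Qed.
Lemma qmx1 : qmx 1 0 0 1 0 1 = 1.
Proof. qmx_entrywise. Qed.
Lemma e1E : e1 k = qmx 1 0 0 0 0 0.
Proof. rewrite /e1; qmx_entrywise. Qed.
Lemma e2E : e2 k = qmx 0 0 0 1 0 0.
Proof. rewrite /e2; qmx_entrywise. Qed.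
Lemma e3E : e3 k = qmx 0 0 0 0 0 1.
Proof. rewrite /e3; qmx_entrywise. Qed.
Lemma alphaE : alpha k = qmx 0 1 0 0 0 0.
Proof. rewrite /alpha; qmx_entrywise. Qed.
Lemma betaE : beta k = qmx 0 0 0 'X 0 0.
Proof. rewrite /beta; qmx_entrywise. Qed.
Lemma gammaE : gamma k = qmx 0 0 0 0 1 0.
Proof. rewrite /gamma; qmx_entrywise. Qed.
Lemma poly_betaE (v : {poly k}) : poly_beta v = qmx 0 0 0 v 0 0.
Proof. rewrite /poly_beta; qmx_entrywise. Qed.

End QuiverMatrices.

Ltac qmx_ring := rewrite ?e1E ?e2E ?e3E ?alphaE ?betaE ?gammaE ?poly_betaE -?qmx1 -?qmx0
  ?(qmxM, qmxD, qmxN, kscale_qmx); congr qmx; ring.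

Section PathAlgebra.
Variable k : fieldType.
Implicit Types (a b c d e f : {poly k}) (x y : Mx k).

Lemma qmx_inj a b c d e f a' b' c' d' e' f' :
  qmx a b c d e f = qmx a' b' c' d' e' f' ->
  [/\ a = a', b = b', c = c', d = d' & (e = e' /\ f = f')].
Proof.
move=> eq; have entry i j := congr1 (fun M : Mx k => M i j) eq.
by have := entry v1 v1; have := entry v1 v2; have := entry v1 v3;
   have := entry v2 v2; have := entry v2 v3; have := entry v3 v3; rewrite !mxE.
Qed.

Lemma in_kQ_qmxE x : in_kQ x ->
  x = qmx (x v1 v1) (x v1 v2) (x v1 v3) (x v2 v2) (x v2 v3) (x v3 v3).
Proof.
case=> lower _; apply/matrixP=> i j; rewrite mxE.
case: i => [[|[|[|i]]] Hi] //; case: j => [[|[|[|j]]] Hj] //=;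
  by [rewrite lower | congr (x _ _); apply: val_inj].
Qed.

Lemma in_kQ_qmx a b c d e f :
  in_kQ (qmx a b c d e f) <-> (size a <= 1)%N /\ (size f <= 1)%N.
Proof.
rewrite /in_kQ !mxE; split=> [[_ //]|[ha hf]]; split=> // i j.
by rewrite mxE; case: i => [[|[|[|i]]] Hi] //; case: j => [[|[|[|j]]] Hj].
Qed.

Lemma in_kQP x : in_kQ x <-> exists (s t : k) b c d e, x = qmx s%:P b c d e t%:P.
Proof.
split=> [xkQ|[s [t [b [c [d [e ->]]]]]]]; last by rewrite in_kQ_qmx !size_polyC_leq1.
have [_ [/size1_polyC h1 /size1_polyC h3]] := xkQ.
by rewrite (in_kQ_qmxE xkQ) h1 h3; do 6 eexists.
Qed.

Lemma in_kQD x y : in_kQ x -> in_kQ y -> in_kQ (x + y).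
Proof.
move=> /in_kQP[s [t [b [c [d [e ->]]]]]] /in_kQP[s' [t' [b' [c' [d' [e' ->]]]]]].
by rewrite qmxD -!polyCD in_kQ_qmx !size_polyC_leq1.
Qed.

Lemma in_kQN x : in_kQ x -> in_kQ (- x).
Proof.
move=> /in_kQP[s [t [b [c [d [e ->]]]]]].
by rewrite qmxN -!polyCN in_kQ_qmx !size_polyC_leq1.
Qed.

Lemma in_kQM x y : in_kQ x -> in_kQ y -> in_kQ (x * y).
Proof.
move=> /in_kQP[s [t [b [c [d [e ->]]]]]] /in_kQP[s' [t' [b' [c' [d' [e' ->]]]]]].
by rewrite qmxM -!polyCM in_kQ_qmx !size_polyC_leq1.
Qed.

Lemma in_kQB x y : in_kQ x -> in_kQ y -> in_kQ (x - y).
Proof. by move=> hx /in_kQN; apply: in_kQD. Qed.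

Lemma in_kQ_kscale s x : in_kQ x -> in_kQ (kscale s x).
Proof.
move=> /in_kQP[s' [t [b [c [d [e ->]]]]]].
by rewrite kscale_qmx -!polyCM in_kQ_qmx !size_polyC_leq1.
Qed.

Lemma in_kQ_poly_beta (v : {poly k}) : in_kQ (poly_beta v).
Proof. by rewrite poly_betaE in_kQ_qmx size_poly0. Qed.

Lemma in_kQ1 : in_kQ (1 : Mx k).
Proof. by rewrite -qmx1 in_kQ_qmx size_poly1. Qed.

Lemma in_kQ0 : in_kQ (0 : Mx k).
Proof. by rewrite -qmx0 in_kQ_qmx size_poly0. Qed.

Lemma in_kQ_e1 : in_kQ (e1 k).
Proof. by rewrite e1E in_kQ_qmx size_poly1 size_poly0. Qed.
Lemma in_kQ_e2 : in_kQ (e2 k).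
Proof. by rewrite e2E in_kQ_qmx size_poly0. Qed.
Lemma in_kQ_e3 : in_kQ (e3 k).
Proof. by rewrite e3E in_kQ_qmx size_poly1 size_poly0. Qed.
Lemma in_kQ_alpha : in_kQ (alpha k).
Proof. by rewrite alphaE in_kQ_qmx size_poly0. Qed.
Lemma in_kQ_beta : in_kQ (beta k).
Proof. by rewrite betaE in_kQ_qmx size_poly0. Qed.
Lemma in_kQ_gamma : in_kQ (gamma k).
Proof. by rewrite gammaE in_kQ_qmx size_poly0. Qed.

Lemma poly_beta0 : poly_beta 0 = 0 :> Mx k.
Proof. by rewrite /poly_beta scale0r. Qed.

Lemma poly_betaM (u v : {poly k}) : poly_beta u * poly_beta v = poly_beta (u * v) :> Mx k.
Proof. qmx_ring. Qed.

Lemma beta_exp m : beta k ^+ m.+1 = poly_beta 'X^(m.+1).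
Proof.
elim: m => [|m IHm]; first by rewrite !expr1.
by rewrite [LHS]exprS IHm [in RHS]exprS -poly_betaM.
Qed.

Lemma alpha_poly_beta_gamma (v : {poly k}) : alpha k * poly_beta v * gamma k = qmx 0 0 v 0 0 0.
Proof. qmx_ring. Qed.

Lemma in_kQ_decomp x : in_kQ x -> exists (s t : k) b c d e,
  x = kscale s (e1 k) + alpha k * poly_beta b + alpha k * poly_beta c * gamma k
      + poly_beta d + poly_beta e * gamma k + kscale t (e3 k).
Proof. by move=> /in_kQP[s [t [b [c [d [e ->]]]]]]; exists s, t, b, c, d, e; qmx_ring. Qed.

Lemma corner_e1_e2 x : in_kQ x -> e1 k * x * e2 k = alpha k * poly_beta (x v1 v2).
Proof. by move=> xkQ; rewrite {1}(in_kQ_qmxE xkQ); qmx_ring. Qed.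

Lemma corner_e2_e2 x : in_kQ x -> e2 k * x * e2 k = poly_beta (x v2 v2).
Proof. by move=> xkQ; rewrite {1}(in_kQ_qmxE xkQ); qmx_ring. Qed.

Lemma corner_e2_e3 x : in_kQ x -> e2 k * x * e3 k = poly_beta (x v2 v3) * gamma k.
Proof. by move=> xkQ; rewrite {1}(in_kQ_qmxE xkQ); qmx_ring. Qed.

End PathAlgebra.

Arguments in_kQ0 {k}.
Arguments in_kQ1 {k}.
Arguments in_kQ_e1 {k}.
Arguments in_kQ_e2 {k}.
Arguments in_kQ_e3 {k}.
Arguments in_kQ_alpha {k}.
Arguments in_kQ_beta {k}.
Arguments in_kQ_gamma {k}.

Create HintDb kQ.
#[export] Hint Resolve in_kQD in_kQN in_kQM in_kQB in_kQ_kscale in_kQ_poly_beta in_kQ0 in_kQ1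
  in_kQ_e1 in_kQ_e2 in_kQ_e3 in_kQ_alpha in_kQ_beta in_kQ_gamma : kQ.

(** * Ideals of kQ and derivations modulo an ideal *)

Section Ideals.
Variable k : fieldType.
Implicit Types (x y a : Mx k) (S : Mx k -> Prop).

Record kQ_ideal := KQIdeal {
  ideal_mem :> Mx k -> Prop;
  ideal0 : ideal_mem 0;
  idealD : forall x y, ideal_mem x -> ideal_mem y -> ideal_mem (x + y);
  idealMl : forall a x, in_kQ a -> ideal_mem x -> ideal_mem (a * x);
  idealMr : forall x a, in_kQ a -> ideal_mem x -> ideal_mem (x * a) }.

Definition catf T n m (s : 'I_n -> T) (t : 'I_m -> T) (i : 'I_(n + m)) : T :=
  match split i with inl j => s j | inr j => t j end.

Lemma gen_idealD S x y : gen_ideal S x -> gen_ideal S y -> gen_ideal S (x + y).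
Proof.
case=> n [a [s [b [h ->]]]] [m [a' [s' [b' [h' ->]]]]].
exists (n + m)%N, (catf a a'), (catf s s'), (catf b b'); split.
  by move=> i; rewrite /catf; case: (split i).
rewrite big_split_ord; congr (_ + _); apply: eq_bigr => i _;
  by rewrite /catf ?(unsplitK (inl i : 'I_n + 'I_m)) ?(unsplitK (inr i : 'I_n + 'I_m)).
Qed.

Lemma gen_ideal_gen S a s b : in_kQ a -> S s -> in_kQ b -> gen_ideal S (a * s * b).
Proof.
by move=> ha hs hb; exists 1%N, (fun=> a), (fun=> s), (fun=> b); rewrite big_ord1.
Qed.

Lemma gen_ideal_min S (I : kQ_ideal) : (forall s, S s -> I s) ->
  forall x, gen_ideal S x -> I x.
Proof.
move=> SI _ [n [a [s [b [h ->]]]]].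
elim/big_ind: _ => [|x y|i _]; [exact: ideal0 | exact: idealD |].
by have [ha [hs hb]] := h i; apply: idealMr hb _; apply: idealMl ha (SI _ hs).
Qed.

Section Congruence.
Variable I : kQ_ideal.

Definition eqmod x y := I (x - y).

Lemma idealN x : I x -> I (- x).
Proof. move=> Ix; rewrite -mulN1r; apply: idealMl Ix; auto with kQ. Qed.

Lemma ideal_kscale s x : I x -> I (kscale s x).
Proof.
have -> : kscale s x = kscale s 1 * x by rewrite /kscale -scalerAl mul1r.
by apply: idealMl; auto with kQ.
Qed.

Lemma eqmod0 x : eqmod x 0 <-> I x.
Proof. by rewrite /eqmod subr0. Qed.

Lemma eqmod_refl x : eqmod x x.
Proof. by rewrite /eqmod subrr; apply: ideal0. Qed.

Lemma eqmod_sym x y : eqmod x y -> eqmod y x.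
Proof. by move=> xy; rewrite /eqmod -opprB; apply: idealN. Qed.

Lemma eqmod_trans y x z : eqmod x y -> eqmod y z -> eqmod x z.
Proof. by move=> xy yz; rewrite /eqmod -(subrKA y); apply: idealD. Qed.

Lemma eqmodD x y x' y' : eqmod x x' -> eqmod y y' -> eqmod (x + y) (x' + y').
Proof. by move=> xx' yy'; rewrite /eqmod opprD addrACA; apply: idealD. Qed.

Lemma eqmodN x y : eqmod x y -> eqmod (- x) (- y).
Proof. by move=> xy; rewrite /eqmod -opprD; apply: idealN. Qed.

Lemma eqmodMl a x y : in_kQ a -> eqmod x y -> eqmod (a * x) (a * y).
Proof. by move=> ha xy; rewrite /eqmod -mulrBr; apply: idealMl. Qed.

Lemma eqmodMr a x y : in_kQ a -> eqmod x y -> eqmod (x * a) (y * a).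
Proof. by move=> ha xy; rewrite /eqmod -mulrBl; apply: idealMr. Qed.

Lemma eqmod_ideal x y : eqmod x y -> I y -> I x.
Proof. by move=> xy /eqmod0 y0; apply/eqmod0; apply: eqmod_trans xy y0. Qed.

Lemma eqmod_sum m (P : pred 'I_m) (F G : 'I_m -> Mx k) :
  (forall j, P j -> eqmod (F j) (G j)) ->
  eqmod (\sum_(j < m | P j) F j) (\sum_(j < m | P j) G j).
Proof.
move=> FG; elim/big_rec2: _ => [|j x y Pj xy]; first exact: eqmod_refl.
by apply: eqmodD => //; apply: FG.
Qed.

End Congruence.
End Ideals.

Ltac mx_ring := apply/matrixP => i j; rewrite ?(mxE, big_ord_recl, big_ord0); ring.

Section Derivations.
Variable k : fieldType.
Variable I : kQ_ideal k.
Implicit Types (x y z a : Mx k).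

Local Notation eqmod := (eqmod I).

Section Derivation.
Variable f : Mx k -> Mx k.
Hypothesis derf : is_derivation_mod k I f.

Lemma der_kQ x : in_kQ x -> in_kQ (f x).
Proof. by case: derf => fkQ _; apply: fkQ. Qed.

Lemma derM x y : in_kQ x -> in_kQ y -> eqmod (f (x * y)) (f x * y + x * f y).
Proof. by case: derf => _ [_ [_ fM]]; apply: fM. Qed.

Lemma der_linear (s : k) x y : in_kQ x -> in_kQ y ->
  eqmod (f (kscale s x + y)) (kscale s (f x) + f y).
Proof. by case: derf => _ [_ [flin _]]; apply: flin. Qed.

Lemma der_eqmod x y : in_kQ x -> in_kQ y -> eqmod x y -> eqmod (f x) (f y).
Proof. by case: derf => _ [fwd _]; apply: fwd. Qed.

Lemma der0 : I (f 0).
Proof.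
have := der_linear 1 in_kQ0 in_kQ0.
rewrite /kscale polyC1 !scale1r !addr0 /eqmod opprD addrA subrr add0r.
by move=> /idealN; rewrite opprK.
Qed.

Lemma derD x y : in_kQ x -> in_kQ y -> eqmod (f (x + y)) (f x + f y).
Proof.
by move=> xkQ ykQ; have := der_linear 1 xkQ ykQ; rewrite /kscale polyC1 !scale1r.
Qed.

Lemma der_kscale (s : k) x : in_kQ x -> eqmod (f (kscale s x)) (kscale s (f x)).
Proof.
move=> xkQ; have := der_linear s xkQ in_kQ0; rewrite !addr0 => h.
by apply: eqmod_trans h _; rewrite /eqmod addrC addKr; apply: der0.
Qed.

Lemma der_ideal x : in_kQ x -> I x -> I (f x).
Proof.
move=> xkQ /eqmod0 x0; have := der_eqmod xkQ in_kQ0 x0.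
by move=> /eqmod_ideal; apply => //; apply: der0.
Qed.

Lemma derM3 x y z : in_kQ x -> in_kQ y -> in_kQ z ->
  eqmod (f (x * y * z)) (f x * y * z + x * f y * z + x * y * f z).
Proof.
move=> xkQ ykQ zkQ; apply: eqmod_trans (derM (in_kQM xkQ ykQ) zkQ) _.
rewrite -mulrDl; apply: eqmodD; last exact: eqmod_refl.
by apply: eqmodMr => //; apply: derM.
Qed.

Lemma der_sandwich u x v : in_kQ u -> in_kQ x -> in_kQ v -> I (f u) -> I (f v) ->
  eqmod (f (u * x * v)) (u * f x * v).
Proof.
move=> ukQ xkQ vkQ fu fv; apply: eqmod_trans (derM3 ukQ xkQ vkQ) _.
rewrite -[X in eqmod _ X]addr0 -[X in eqmod _ (X + _)]add0r.
apply: eqmodD; first apply: eqmodD.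
- by apply/eqmod0; apply: idealMr vkQ _; apply: idealMr.
- exact: eqmod_refl.
- by apply/eqmod0; apply: idealMl; auto with kQ.
Qed.

Lemma der_idempotent e : in_kQ e -> e * e = e -> I (e * f e * e).
Proof.
move=> ekQ ee; have := eqmodMr ekQ (eqmodMl ekQ (derM ekQ ekQ)).
rewrite ee mulrDr mulrDl !mulrA -[_ * e * e]mulrA !ee.
by rewrite /eqmod opprD addrA subrr add0r => /idealN; rewrite opprK.
Qed.

Lemma der_orthogonal e e' : in_kQ e -> in_kQ e' -> e * e' = 0 ->
  eqmod (e * f e') (- (f e * e')).
Proof.
move=> ekQ e'kQ ee'; have := derM ekQ e'kQ; rewrite ee' => /eqmod_sym /eqmod_ideal.
by rewrite /eqmod opprK addrC; apply; apply: der0.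
Qed.

Lemma der_idempotents_inner m (E : 'I_m -> Mx k) :
  (forall i, in_kQ (E i)) -> (forall i j, E i * E j = E i *+ (i == j)) ->
  \sum_i E i = 1 ->
  let a := \sum_j f (E j) * E j in forall i, I (f (E i) - (a * E i - E i * a)).
Proof.
move=> EkQ Emul Esum a i.
have Eii : E i * E i = E i by rewrite Emul eqxx.
have Eij j : j != i -> E i * E j = 0 by move=> ji; rewrite Emul eq_sym (negbTE ji).
have aE : a * E i = f (E i) * E i.
  rewrite /a mulr_suml (bigD1 i) //= big1 ?addr0 => [|j ji]; first by rewrite -mulrA Eii.
  by rewrite -mulrA Emul (negbTE ji) mulr0n mulr0.
have Ea : eqmod (E i * a) (- \sum_(j | j != i) f (E i) * E j).
  rewrite /a mulr_sumr (bigD1 i) //= -[X in eqmod _ X]add0r.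
  apply: eqmodD; first by apply/eqmod0; rewrite mulrA; apply: der_idempotent.
  rewrite -sumrN; apply: eqmod_sum => j ji; rewrite mulrA.
  apply: eqmod_trans (eqmodMr (EkQ j) (der_orthogonal (EkQ i) (EkQ j) (Eij j ji))) _.
  by rewrite mulNr -mulrA Emul eqxx; apply: eqmod_refl.
have sumE : f (E i) * E i - f (E i) = - \sum_(j | j != i) f (E i) * E j.
  rewrite -{2}[f (E i)]mulr1 -Esum (bigD1 i) //= mulrDr mulr_sumr.
  by rewrite opprD addrA subrr add0r.
suff h : eqmod (f (E i) * E i - E i * a) (f (E i)) by rewrite aE; apply: eqmod_sym h.
apply: eqmod_trans (eqmodD (eqmod_refl I (f (E i) * E i)) (eqmodN Ea)) _.
by rewrite -sumE opprB addrC subrK; apply: eqmod_refl.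
Qed.

Lemma der_poly_beta w : I (f (e2 k)) -> eqmod (f (beta k)) (poly_beta w) ->
  forall v, eqmod (f (poly_beta v)) (poly_beta (v^`() * w)).
Proof.
move=> fe2 fbeta; elim/poly_ind => [|q c IHq].
  by rewrite deriv0 mul0r poly_beta0; apply/eqmod0; apply: der0.
have -> : poly_beta (q * 'X + c%:P) = poly_beta q * beta k + kscale c (e2 k) by qmx_ring.
apply: eqmod_trans (derD (in_kQM _ _) _) _; auto with kQ.
have -> : poly_beta ((q * 'X + c%:P)^`() * w) =
    poly_beta (q^`() * w) * beta k + poly_beta q * poly_beta w + 0.
  by rewrite derivMXaddC; qmx_ring.
apply: eqmodD; first apply: eqmod_trans (derM _ _) _; auto with kQ.
- by apply: eqmodD; [apply: eqmodMr | apply: eqmodMl]; auto with kQ.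
- by apply/eqmod0; apply: eqmod_ideal (der_kscale _ _) _; auto with kQ; apply: ideal_kscale.
Qed.

Lemma der_vanish : I (f (e1 k)) -> I (f (e2 k)) -> I (f (e3 k)) ->
  I (f (alpha k)) -> I (f (beta k)) -> I (f (gamma k)) ->
  forall x, in_kQ x -> I (f x).
Proof.
move=> fe1 fe2 fe3 falpha fbeta fgamma.
pose Z x := in_kQ x /\ I (f x).
have ZD x y : Z x -> Z y -> Z (x + y).
  case=> xkQ fx [ykQ fy]; split; auto with kQ.
  by apply: eqmod_ideal (derD xkQ ykQ) _; apply: idealD.
have ZM x y : Z x -> Z y -> Z (x * y).
  case=> xkQ fx [ykQ fy]; split; auto with kQ.
  by apply: eqmod_ideal (derM xkQ ykQ) _; apply: idealD; [apply: idealMr | apply: idealMl].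
have Zs s x : Z x -> Z (kscale s x).
  case=> xkQ fx; split; auto with kQ.
  by apply: eqmod_ideal (der_kscale s xkQ) _; apply: ideal_kscale.
have Zpb v : Z (poly_beta v).
  have fbeta0 : eqmod (f (beta k)) (poly_beta 0) by rewrite poly_beta0; apply/eqmod0.
  split; auto with kQ.
  by have := der_poly_beta fe2 fbeta0 v; rewrite mulr0 poly_beta0 => /eqmod0.
move=> x /in_kQ_decomp[s [t [b [c [d [e ->]]]]]].
suff [] : Z (kscale s (e1 k) + alpha k * poly_beta b + alpha k * poly_beta c * gamma k
      + poly_beta d + poly_beta e * gamma k + kscale t (e3 k)) by [].
repeat apply: (ZD); repeat apply: (ZM); try apply: (Zs).
all: by [apply: Zpb | split; auto with kQ].
Qed.

Lemma der_arrows_corner : I (f (e1 k)) -> I (f (e2 k)) -> I (f (e3 k)) ->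
  [/\ eqmod (f (alpha k)) (alpha k * poly_beta (f (alpha k) v1 v2)),
      eqmod (f (beta k)) (poly_beta (f (beta k) v2 v2)) &
      eqmod (f (gamma k)) (poly_beta (f (gamma k) v2 v3) * gamma k)].
Proof.
move=> fe1 fe2 fe3; split.
- rewrite -(corner_e1_e2 (der_kQ in_kQ_alpha)).
  rewrite {1}(_ : alpha k = e1 k * alpha k * e2 k); last by qmx_ring.
  by apply: der_sandwich; auto with kQ.
- rewrite -(corner_e2_e2 (der_kQ in_kQ_beta)).
  rewrite {1}(_ : beta k = e2 k * beta k * e2 k); last by qmx_ring.
  by apply: der_sandwich; auto with kQ.
- rewrite -(corner_e2_e3 (der_kQ in_kQ_gamma)).
  rewrite {1}(_ : gamma k = e2 k * gamma k * e3 k); last by qmx_ring.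
  by apply: der_sandwich; auto with kQ.
Qed.

End Derivation.

Definition sub_inner (f : Mx k -> Mx k) a x := f x - (a * x - x * a).

Lemma sub_inner_der f a : is_derivation_mod k I f -> in_kQ a ->
  is_derivation_mod k I (sub_inner f a).
Proof.
move=> derf akQ; rewrite /sub_inner; split; [|split; [|split]].
- by move=> x xkQ; apply: in_kQB; [apply: der_kQ | auto with kQ].
- move=> x y xkQ ykQ xy.
  have -> : f x - (a * x - x * a) - (f y - (a * y - y * a)) =
      (f x - f y) - (a * (x - y) - (x - y) * a) by mx_ring.
  apply: idealD; first exact: der_eqmod.
  by apply: idealN; apply: idealD; [apply: idealMl | apply: idealN; apply: idealMr].
- move=> s x y xkQ ykQ.
  have -> : f (kscale s x + y) - (a * (kscale s x + y) - (kscale s x + y) * a) -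
      (kscale s (f x - (a * x - x * a)) + (f y - (a * y - y * a))) =
      f (kscale s x + y) - (kscale s (f x) + f y) by rewrite /kscale; mx_ring.
  exact: der_linear.
- move=> x y xkQ ykQ.
  have -> : f (x * y) - (a * (x * y) - x * y * a) -
      ((f x - (a * x - x * a)) * y + x * (f y - (a * y - y * a))) =
      f (x * y) - (f x * y + x * f y) by mx_ring.
  exact: derM.
Qed.

Lemma sub_inner_comm f a x : a * x = x * a -> sub_inner f a x = f x.
Proof. by move=> ax; rewrite /sub_inner ax subrr subr0. Qed.

Lemma sub_innerA f a b x : sub_inner (sub_inner f a) b x = sub_inner f (a + b) x.
Proof. by rewrite /sub_inner; mx_ring. Qed.

Lemma der_normalize_idempotents f : is_derivation_mod k I f -> exists2 a, in_kQ a &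
  [/\ I (sub_inner f a (e1 k)), I (sub_inner f a (e2 k)) & I (sub_inner f a (e3 k))].
Proof.
move=> derf; pose E (i : 'I_3) : Mx k := delta_mx i i.
have EkQ i : in_kQ (E i).
  case: i => [[|[|[|?]]] Hi] //; rewrite /E (bool_irrelevance Hi isT).
  - exact: in_kQ_e1.
  - exact: in_kQ_e2.
  - exact: in_kQ_e3.
have Emul i j : E i * E j = E i *+ (i == j).
  by rewrite /E -mulmxE mul_delta_mx_cond; case: eqP => [->|].
have Esum : \sum_i E i = 1 by rewrite /E -mx1_sum_delta.
exists (\sum_j f (E j) * E j).
  elim/big_ind: _ => [||j _]; [exact: in_kQ0 | exact: in_kQD |].
  by apply: in_kQM => //; apply: der_kQ.
have := der_idempotents_inner derf EkQ Emul Esum.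
by move=> /= Ea; split; [apply: (Ea v1) | apply: (Ea v2) | apply: (Ea v3)].
Qed.

End Derivations.

(** * Paths and the arrow ideal *)

Section ArrowIdeal.
Variable k : fieldType.

Lemma arrow_ideal_pow2_gen i j (a b : Mx k) : in_kQ a -> in_kQ b ->
  arrow_ideal_pow k 2 (a * (arrow k i * arrow k j) * b).
Proof.
move=> akQ bkQ; apply: gen_ideal_gen => //.
by exists [tuple i; j]; rewrite /= !big_cons big_nil mulr1.
Qed.

Lemma arrow_ideal_pow2_qmx b c d e : 'X %| b -> 'X^2 %| d -> 'X %| e ->
  arrow_ideal_pow k 2 (qmx 0 b c d e 0).
Proof.
move=> /dvdpP[b' ->] /dvdpP[d' ->] /dvdpP[e' ->].
have c0kQ : in_kQ (qmx (take_poly 1 c) 0 0 0 0 0).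
  by rewrite in_kQ_qmx size_take_poly size_poly0.
have -> : qmx 0 (b' * 'X) c (d' * 'X^2) (e' * 'X) 0 =
    1 * (arrow k v1 * arrow k v2) * (poly_beta b' + poly_beta (drop_poly 1 c) * gamma k)
    + qmx (take_poly 1 c) 0 0 0 0 0 * (arrow k v1 * arrow k v3) * 1
    + 1 * (arrow k v2 * arrow k v2) * poly_beta d'
    + poly_beta e' * (arrow k v2 * arrow k v3) * 1.
  rewrite -{1}(poly_take_drop 1 c) /arrow /=; qmx_ring.
by repeat apply: gen_idealD; apply: arrow_ideal_pow2_gen; auto with kQ.
Qed.

Lemma arrow_path_qmx (s : seq 'I_3) : s != [::] -> exists b c d e,
  \prod_(i <- s) arrow k i = qmx 0 b c d e 0 /\
  [/\ 'X^((size s).-1) %| b, 'X^((size s).-2) %| c, 'X^(size s) %| d & 'X^((size s).-1) %| e].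
Proof.
elim: s => [|i s IHs] // _; rewrite big_cons.
case: s IHs => [_|j s /(_ isT)[b [c [d [e [-> [Xb Xc Xd Xe]]]]]]].
  rewrite big_nil mulr1 expr0 expr1.
  case: i => [[|[|[|?]]] ?] //; rewrite /arrow /=.
  - by exists 1, 0, 0, 0; rewrite alphaE !dvdp0 dvd1p.
  - by exists 0, 0, 'X, 0; rewrite betaE !dvdp0 dvdpp.
  - by exists 0, 0, 0, 1; rewrite gammaE !dvdp0 dvd1p.
case: i => [[|[|[|?]]] ?] //; rewrite /arrow /=.
- by exists d, e, 0, 0; split; [qmx_ring | rewrite !dvdp0].
- exists 0, 0, ('X * d), ('X * e); split; first qmx_ring.
  by rewrite /= !dvdp0; split=> //; rewrite exprS dvdp_mul2l ?polyX_eq0.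
- by exists 0, 0, 0, 0; split; [qmx_ring | rewrite !dvdp0].
Qed.

End ArrowIdeal.

(** * The ideal of Lambda *)

Section LambdaIdeal.
Variable k : fieldType.
Variable p : nat.
Implicit Types (b c d e u v w : {poly k}) (x : Mx k).

Local Notation n := (6 * p + 1)%N.
Local Notation V := (V_sub k p).

Lemma V_subD u v : V u -> V v -> V (u + v).
Proof.
move=> [q [c1 [c2 [c3 ->]]]] [q' [c1' [c2' [c3' ->]]]].
by exists (q + q'), (c1 + c1'), (c2 + c2'), (c3 + c3'); rewrite polyCD !scalerDl; ring.
Qed.

Lemma V_subZ (s : k) v : V v -> V (s%:P * v).
Proof.
move=> [q [c1 [c2 [c3 ->]]]]; exists (s%:P * q), (s * c1), (s * c2), (s * c3).
by rewrite -!mul_polyC !polyCM; ring.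
Qed.

Lemma V_sub_dvd v : 'X^n %| v -> V v.
Proof.
by move=> /dvdpP[q ->]; exists q, 0, 0, 0; rewrite !scale0r mulrC; ring.
Qed.

Lemma V_sub1 : V 1.
Proof. by exists 0, 1, 0, 0; rewrite !scale0r; ring. Qed.

Lemma V_subXX : V ('X + 'X^2).
Proof. by exists 0, 0, 1, 0; rewrite !scale0r scale1r; ring. Qed.

Lemma V_subX2p : V 'X^(2 * p + 1).
Proof. by exists 0, 0, 0, 1; rewrite !scale0r scale1r; ring. Qed.

Lemma V_sub0 : V 0.
Proof. by apply: V_sub_dvd; rewrite dvdp0. Qed.

Definition Ilam_mem x := exists b c d e,
  x = qmx 0 b c d e 0 /\ [/\ 'X^n %| b, V c, 'X^n %| d & 'X^n %| e].

Lemma Ilam_qmx b c d e :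
  Ilam_mem (qmx 0 b c d e 0) <-> [/\ 'X^n %| b, V c, 'X^n %| d & 'X^n %| e].
Proof.
split=> [[b' [c' [d' [e' [/qmx_inj[_ -> -> -> [-> _]] //]]]]]|conds].
by exists b, c, d, e.
Qed.

Lemma Ilam0 : Ilam_mem 0.
Proof. by rewrite -qmx0 Ilam_qmx !dvdp0; split=> //; apply: V_sub0. Qed.

Lemma IlamD x y : Ilam_mem x -> Ilam_mem y -> Ilam_mem (x + y).
Proof.
move=> [b [c [d [e [-> [Xb Vc Xd Xe]]]]]] [b' [c' [d' [e' [-> [Xb' Vc' Xd' Xe']]]]]].
by rewrite qmxD addr0 Ilam_qmx; split; rewrite ?dvdp_add //; apply: V_subD.
Qed.

Lemma IlamMl a x : in_kQ a -> Ilam_mem x -> Ilam_mem (a * x).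
Proof.
move=> /in_kQP[s [t [a1 [a2 [a3 [a4 ->]]]]]] [b [c [d [e [-> [Xb Vc Xd Xe]]]]]].
rewrite qmxM !mulr0 !addr0 Ilam_qmx.
split; rewrite ?dvdp_add ?dvdp_mull //.
by apply: V_subD; [apply: V_subZ | apply: V_sub_dvd; apply: dvdp_mull].
Qed.

Lemma IlamMr x a : in_kQ a -> Ilam_mem x -> Ilam_mem (x * a).
Proof.
move=> /in_kQP[s [t [a1 [a2 [a3 [a4 ->]]]]]] [b [c [d [e [-> [Xb Vc Xd Xe]]]]]].
rewrite qmxM !mul0r !add0r Ilam_qmx.
split; rewrite ?dvdp_add ?dvdp_mulr //.
by apply: V_subD; [apply: V_sub_dvd; apply: dvdp_mulr | rewrite mulrC; apply: V_subZ].
Qed.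

Definition Ilam : kQ_ideal k := KQIdeal Ilam0 IlamD IlamMl IlamMr.

Lemma Lam_idealE x : Lam_ideal k p x <-> Ilam x.
Proof.
have betan : beta k ^+ n = poly_beta 'X^n by rewrite addn1 beta_exp.
have beta2p : beta k ^+ (2 * p + 1) = poly_beta 'X^(2 * p + 1) by rewrite addn1 beta_exp.
split.
  apply: gen_ideal_min => s [|[|[|]]] ->.
  - rewrite betan poly_betaE; apply/Ilam_qmx.
    by rewrite !dvdp0 dvdpp; split=> //; apply: V_sub0.
  - rewrite (_ : alpha k * gamma k = qmx 0 0 1 0 0 0); last by qmx_ring.
    by apply/Ilam_qmx; rewrite !dvdp0; split=> //; apply: V_sub1.
  - rewrite beta_exp (_ : _ * _ = qmx 0 0 ('X + 'X^2) 0 0 0); last by qmx_ring.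
    by apply/Ilam_qmx; rewrite !dvdp0; split=> //; apply: V_subXX.
  - rewrite beta2p alpha_poly_beta_gamma.
    by apply/Ilam_qmx; rewrite !dvdp0; split=> //; apply: V_subX2p.
move=> [b [c [d [e [-> [/dvdpP[b' ->] [q [c1 [c2 [c3 ->]]]] /dvdpP[d' ->] /dvdpP[e' ->]]]]]]].
have -> : qmx 0 (b' * 'X^n) ('X^n * q + c1%:P + c2 *: ('X + 'X^2) + c3 *: 'X^(2 * p + 1))
      (d' * 'X^n) (e' * 'X^n) 0 =
    alpha k * beta k ^+ n * poly_beta b'
    + alpha k * beta k ^+ n * (poly_beta q * gamma k)
    + kscale c1 (e1 k) * (alpha k * gamma k) * 1
    + kscale c2 (e1 k) * (alpha k * (beta k + beta k ^+ 2) * gamma k) * 1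
    + kscale c3 (e1 k) * (alpha k * beta k ^+ (2 * p + 1) * gamma k) * 1
    + 1 * beta k ^+ n * poly_beta d'
    + 1 * beta k ^+ n * (poly_beta e' * gamma k).
  by rewrite betan beta2p beta_exp -!mul_polyC; qmx_ring.
by repeat apply: gen_idealD; apply: gen_ideal_gen; auto with kQ; do ?[by left | right].
Qed.

Lemma I_nnnVE x : I_nnnV k n V x <-> Ilam x.
Proof.
have betan : beta k ^+ n = poly_beta 'X^n by rewrite addn1 beta_exp.
split.
  apply: gen_ideal_min => s [|[|[|[v [Vv]]]]] ->.
  - rewrite betan (_ : _ * _ = qmx 0 'X^n 0 0 0 0); last by qmx_ring.
    by apply/Ilam_qmx; rewrite !dvdp0 dvdpp; split=> //; apply: V_sub0.
  - rewrite betan poly_betaE; apply/Ilam_qmx.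
    by rewrite !dvdp0 dvdpp; split=> //; apply: V_sub0.
  - rewrite betan (_ : _ * _ = qmx 0 0 0 0 'X^n 0); last by qmx_ring.
    by apply/Ilam_qmx; rewrite !dvdp0 dvdpp; split=> //; apply: V_sub0.
  - by rewrite alpha_poly_beta_gamma; apply/Ilam_qmx; rewrite !dvdp0.
move=> [b [c [d [e [-> [/dvdpP[b' ->] Vc /dvdpP[d' ->] /dvdpP[e' ->]]]]]]].
have -> : qmx 0 (b' * 'X^n) c (d' * 'X^n) (e' * 'X^n) 0 =
    1 * (alpha k * beta k ^+ n) * poly_beta b'
    + 1 * (alpha k * poly_beta c * gamma k) * 1
    + 1 * beta k ^+ n * poly_beta d'
    + poly_beta e' * (beta k ^+ n * gamma k) * 1.
  by rewrite betan; qmx_ring.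
repeat apply: gen_idealD; apply: gen_ideal_gen; auto with kQ; do ?[by left | right].
by exists c.
Qed.

Lemma Ilam_sub_arrow_ideal_pow2 x : (0 < p)%N -> Ilam x -> arrow_ideal_pow k 2 x.
Proof.
move=> p_gt0 [b [c [d [e [-> [Xb _ Xd Xe]]]]]].
have Xm m v : (m <= n)%N -> 'X^n %| v -> 'X^m %| v.
  by move=> mn; apply: dvdp_trans; apply: dvdp_exp2l.
by apply: arrow_ideal_pow2_qmx; [apply: (Xm 1%N) | apply: (Xm 2%N) | apply: (Xm 1%N)];
  rewrite // ?addn1; lia.
Qed.

Lemma arrow_ideal_pow_sub_Ilam x : arrow_ideal_pow k (n + 2) x -> Ilam x.
Proof.
apply: gen_ideal_min => _ [t ->].
have [|b [c [d [e [-> []]]]]] := @arrow_path_qmx k t.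
  by rewrite -size_eq0 size_tuple addn2.
rewrite size_tuple addn2 /= => Xb Xc Xd Xe; apply/Ilam_qmx; split.
- by apply: dvdp_trans _ Xb; apply: dvdp_exp2l; lia.
- exact: V_sub_dvd.
- by apply: dvdp_trans _ Xd; apply: dvdp_exp2l; lia.
- by apply: dvdp_trans _ Xe; apply: dvdp_exp2l; lia.
Qed.

End LambdaIdeal.

Arguments V_sub0 {k p}.
Arguments V_sub1 {k p}.
Arguments V_subXX {k p}.
Arguments V_subX2p {k p}.

(** * Comparison of coefficients *)

Lemma dvdp_Xn_coef (k : fieldType) (v : {poly k}) m :
  (forall j, (j < m)%N -> v`_j = 0) -> 'X^m %| v.
Proof.
move=> v0; rewrite -(poly_take_drop m v) (_ : take_poly m v = 0) ?add0r ?dvdp_mull //.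
by apply/polyP => j; rewrite coef_take_poly coef0; case: ifP => // /v0.
Qed.

Section Coefficients.
Variable k : fieldType.
Variable p : nat.
Hypothesis p_gt1 : (1 < p)%N.
Hypothesis pchar0 : p%:R = 0 :> k.
Implicit Types (u v w : {poly k}).

Local Notation n := (6 * p + 1)%N.
Local Notation V := (V_sub k p).

Lemma V_sub_coef v : V v ->
  v`_2 = v`_1 /\ forall j, (3 <= j < n)%N -> j != (2 * p + 1)%N -> v`_j = 0.
Proof.
move=> [q [c1 [c2 [c3 ->]]]].
have coefV j : (j < n)%N ->
    ('X^n * q + c1%:P + c2 *: ('X + 'X^2) + c3 *: 'X^(2 * p + 1))`_j =
    (if j == 0%N then c1 else 0) + c2 * ((j == 1%N)%:R + (j == 2%N)%:R)
    + c3 * (j == (2 * p + 1)%N)%:R.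
  by move=> jn; rewrite !coefD coefXnM jn add0r coefC !coefZ coefD coefX !coefXn.
split.
  rewrite !coefV; try lia.
  have [-> ->] : (2 == 2 * p + 1)%N = false /\ (1 == 2 * p + 1)%N = false by split; lia.
  by rewrite /=; ring.
move=> j /andP[j3 jn] j2p; rewrite coefV // (negbTE j2p).
have [-> [-> ->]] : [/\ (j == 0)%N = false, (j == 1)%N = false & (j == 2)%N = false].
  by split; lia.
by rewrite /=; ring.
Qed.

(* With s = u (X + X^2) + (1 + 2X) w and r = u X^(2p+1) + X^(2p) w (characteristic p), the
   coefficients of r in degrees 2p..6p give w_0 = 0 and w_(i+1) = -u_i; those of s in degrees
   1, 2, 3 and 2p+3 then force u_1 = u_(2p+1) = 0, and those of s above degree 4p propagate
   w_j = 0 up to degree 6p. *)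
Lemma V_sub_derivation_coef u w :
  V u -> V (u * ('X + 'X^2) + ('X + 'X^2)^`() * w) ->
  V (u * 'X^(2 * p + 1) + ('X^(2 * p + 1))^`() * w) ->
  'X^n %| w /\ 'X^n %| u - (u`_0)%:P.
Proof.
set s := u * ('X + 'X^2) + _; set r := u * 'X^(2 * p + 1) + _.
move=> Vu /V_sub_coef[s21 s0] /V_sub_coef[_ r0].
have [u21 u0] := V_sub_coef Vu.
have sS j : s`_j.+2 = u`_j.+1 + u`_j + (w`_j.+2 + w`_j.+1 *+ 2).
  rewrite /s derivD derivX derivXn mulrDr mulrDl !coefD coefMX coefMXn mul1r.
  by rewrite mulrnAl coefMn coefXM /= subn2.
have s1 : s`_1 = u`_0 + (w`_1 + w`_0 *+ 2).
  rewrite /s derivD derivX derivXn mulrDr mulrDl !coefD coefMX coefMXn mul1r.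
  by rewrite mulrnAl coefMn coefXM /= addr0.
have charX (a : k) : a *+ (2 * p + 1) = a.
  by rewrite -mulr_natr natrD natrM pchar0 mulr0 add0r mulr1.
have rE j : r`_(j + 2 * p) = (if j is i.+1 then u`_i else 0) + w`_j.
  rewrite /r derivXn (_ : (2 * p + 1).-1 = 2 * p)%N; last by rewrite addn1.
  rewrite mulrnAl coefD coefMXn coefMn coefXnM charX.
  rewrite (_ : (j + 2 * p < 2 * p)%N = false) ?addnK; last lia.
  case: j => [|i]; first by rewrite (_ : (0 + 2 * p < 2 * p + 1)%N = true); last lia.
  rewrite (_ : (i.+1 + 2 * p < 2 * p + 1)%N = false); last lia.
  by rewrite (_ : (i.+1 + 2 * p - (2 * p + 1))%N = i); last lia.
have w0 : w`_0 = 0 by rewrite -[w`_0]add0r -(rE 0%N) r0 //; lia.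
have wS i : (0 < i < 4 * p)%N -> w`_i.+1 = - u`_i.
  move=> /andP[i0 i4p]; apply/eqP; rewrite -addr_eq0 addrC -(rE i.+1) r0 //; lia.
have w2 : w`_2 = - u`_1 by apply: wS; lia.
have w3 : w`_3 = - u`_1 by rewrite -u21; apply: wS; lia.
have w1 : w`_1 = 0.
  move/eqP: s21; rewrite sS s1 w0 w2 -subr_eq0 => /eqP s21.
  by rewrite -[in RHS]s21; ring.
have u1 : u`_1 = 0.
  have := s0 3%N ltac:(lia) ltac:(lia); rewrite sS u21 w3 w2 => s3.
  by rewrite -[RHS]oppr0 -[in RHS]s3; ring.
have u2p1 : u`_(2 * p + 1) = 0.
  have := s0 (2 * p + 1).+2 ltac:(lia) ltac:(lia).
  rewrite sS (wS (2 * p + 1).+1 ltac:(lia)) (wS (2 * p + 1) ltac:(lia)) u0 => [s2p3||]; try lia.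
  by rewrite -[RHS]oppr0 -[in RHS]s2p3; ring.
have uz m : (0 < m < n)%N -> u`_m = 0.
  move=> /andP[m0 mn]; case: (eqVneq m 1%N) => [->|m1] //.
  case: (eqVneq m 2%N) => [->|m2]; first by rewrite u21.
  case: (eqVneq m (2 * p + 1)%N) => [->|m2p] //.
  by apply: u0 m2p; lia.
have wz j : (j < n)%N -> w`_j = 0.
  elim: j => [|j IHj] jn //; case: j IHj jn => [|i] IHi jn //.
  case: (ltnP i.+1 (4 * p)) => i4p; first by rewrite wS ?uz ?oppr0 //; lia.
  have := s0 i.+2 ltac:(lia) ltac:(lia).
  by rewrite sS IHi ?uz ?mul0rn ?add0r ?addr0; try lia.
split; apply: dvdp_Xn_coef => j jn; first exact: wz.
by rewrite coefB coefC; case: j jn => [|j] jn /=; rewrite ?subrr // subr0 uz.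
Qed.

End Coefficients.

(** * Vanishing of the first Hochschild cohomology *)

Section LambdaHH1.
Variable k : fieldType.
Variable p : nat.
Implicit Types (u v w : {poly k}) (f : Mx k -> Mx k).

Local Notation V := (V_sub k p).
Local Notation I := (Ilam k p).

Lemma Ilam_der_V_stable f u w : is_derivation_mod k I f ->
  I (f (e2 k)) -> I (f (gamma k)) ->
  eqmod I (f (alpha k)) (alpha k * poly_beta u) -> eqmod I (f (beta k)) (poly_beta w) ->
  forall v, V v -> V (u * v + v^`() * w).
Proof.
move=> derf fe2 fgamma falpha fbeta v Vv.
have Iv : I (alpha k * poly_beta v * gamma k).
  by rewrite alpha_poly_beta_gamma; apply/Ilam_qmx; rewrite !dvdp0.
have vkQ : in_kQ (alpha k * poly_beta v * gamma k) by auto with kQ.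
have fv : eqmod I (alpha k * poly_beta (u * v + v^`() * w) * gamma k)
                  (f (alpha k * poly_beta v * gamma k)).
  apply: eqmod_sym; apply: eqmod_trans (derM3 derf _ _ _) _; auto with kQ.
  have -> : alpha k * poly_beta (u * v + v^`() * w) * gamma k =
      alpha k * poly_beta u * poly_beta v * gamma k
      + alpha k * poly_beta (v^`() * w) * gamma k + alpha k * poly_beta v * 0 by qmx_ring.
  apply: eqmodD; first apply: eqmodD.
  - by apply: eqmodMr; [|apply: eqmodMr]; auto with kQ.
  - by apply: eqmodMr; [|apply: eqmodMl; [|apply: der_poly_beta]]; auto with kQ.
  - by apply: eqmodMl; [auto with kQ | apply/eqmod0].
have := eqmod_ideal fv (der_ideal derf vkQ Iv).
by rewrite alpha_poly_beta_gamma => /Ilam_qmx[].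
Qed.

Lemma Ilam_normal_der_inner_e1 f : (1 < p)%N -> p%:R = 0 :> k -> is_derivation_mod k I f ->
  I (f (e1 k)) -> I (f (e2 k)) -> I (f (e3 k)) -> I (f (gamma k)) ->
  exists c : k, forall x, in_kQ x -> I (sub_inner f (kscale c (e1 k)) x).
Proof.
move=> p_gt1 pchar0 derf fe1 fe2 fe3 fgamma.
have [falpha fbeta _] := der_arrows_corner derf fe1 fe2 fe3.
set u : {poly k} := f (alpha k) v1 v2 in falpha.
set w : {poly k} := f (beta k) v2 v2 in fbeta.
have Vstable := Ilam_der_V_stable derf fe2 fgamma falpha fbeta.
have Vu : V u by have := Vstable 1 V_sub1; rewrite derivC mul0r addr0 mulr1.
have [Xw Xu] :=
  V_sub_derivation_coef p_gt1 pchar0 Vu (Vstable _ V_subXX) (Vstable _ V_subX2p).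
exists u`_0; apply: der_vanish; first by apply: sub_inner_der; auto with kQ.
- by rewrite sub_inner_comm //; qmx_ring.
- by rewrite sub_inner_comm //; qmx_ring.
- by rewrite sub_inner_comm //; qmx_ring.
- rewrite /sub_inner (_ : kscale u`_0 (e1 k) * alpha k - alpha k * kscale u`_0 (e1 k) =
    alpha k * poly_beta (u`_0)%:P); last by qmx_ring.
  apply: eqmod_trans falpha _; rewrite /eqmod.
  rewrite (_ : alpha k * poly_beta u - alpha k * poly_beta (u`_0)%:P =
    qmx 0 (u - (u`_0)%:P) 0 0 0 0); last by qmx_ring.
  by apply/Ilam_qmx; rewrite !dvdp0; split=> //; apply: V_sub0.
- rewrite sub_inner_comm; last by qmx_ring.
  apply: eqmod_ideal fbeta _; rewrite poly_betaE; apply/Ilam_qmx.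
  by rewrite !dvdp0; split=> //; apply: V_sub0.
- by rewrite sub_inner_comm //; qmx_ring.
Qed.

Lemma Ilam_HH1 : (1 < p)%N -> p%:R = 0 :> k -> HH1_vanishes k I.
Proof.
move=> p_gt1 pchar0 f derf.
have [a akQ [ge1 ge2 ge3]] := der_normalize_idempotents derf.
have derg := sub_inner_der derf akQ; set g := sub_inner f a in ge1 ge2 ge3 derg.
have [_ _ ggamma] := der_arrows_corner derg ge1 ge2 ge3.
set t : {poly k} := g (gamma k) v2 v3 in ggamma.
have derh := sub_inner_der derg (in_kQ_poly_beta t).
have he1 : I (sub_inner g (poly_beta t) (e1 k)) by rewrite sub_inner_comm //; qmx_ring.
have he2 : I (sub_inner g (poly_beta t) (e2 k)) by rewrite sub_inner_comm //; qmx_ring.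
have he3 : I (sub_inner g (poly_beta t) (e3 k)) by rewrite sub_inner_comm //; qmx_ring.
have hgamma : I (sub_inner g (poly_beta t) (gamma k)).
  by rewrite /sub_inner (_ : poly_beta t * gamma k - gamma k * poly_beta t =
    poly_beta t * gamma k) //; qmx_ring.
have [c hc] := Ilam_normal_der_inner_e1 p_gt1 pchar0 derh he1 he2 he3 hgamma.
exists (a + poly_beta t + kscale c (e1 k)); split; first by auto with kQ.
by move=> x xkQ; have := hc x xkQ; rewrite /g !sub_innerA addrA.
Qed.

End LambdaHH1.

Lemma HH1_vanishes_ext (k : fieldType) (I J : Mx k -> Prop) :
  (forall x, I x <-> J x) -> HH1_vanishes k I -> HH1_vanishes k J.
Proof.
move=> IJ HI f [fkQ [fwd [flin fM]]].
have derI : is_derivation_mod k I f.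
  split=> //; split; [|split].
  - by move=> x y xkQ ykQ /IJ xy; apply/IJ; apply: fwd.
  - by move=> s x y xkQ ykQ; apply/IJ; apply: flin.
  - by move=> x y xkQ ykQ; apply/IJ; apply: fM.
have [a [akQ fa]] := HI f derI.
by exists a; split=> // x xkQ; apply/IJ; apply: fa.
Qed.

Theorem mainTheorem19 (k : fieldType) (p : nat) (hp : p \in [pchar k]) :
  (forall x : Mx k, Lam_ideal k p x <-> I_nnnV k (6 * p + 1) (V_sub k p) x) /\
  admissible k (Lam_ideal k p) /\
  HH1_vanishes k (Lam_ideal k p).
Proof.
have p_gt1 : (1 < p)%N := prime_gt1 (pcharf_prime hp).
split; first by move=> x; split=> [/Lam_idealE/I_nnnVE | /I_nnnVE/Lam_idealE].
split.
  split=> [x /Lam_idealE|]; first by apply: Ilam_sub_arrow_ideal_pow2; lia.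
  exists (6 * p + 1 + 2)%N; split; first lia.
  by move=> x /arrow_ideal_pow_sub_Ilam/Lam_idealE.
apply: HH1_vanishes_ext (Ilam_HH1 p_gt1 (pcharf0 hp)) => x.
exact: iff_sym (Lam_idealE _ _).
Qed.
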